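(* Let $S_1,\dots,S_n$ be real scores, $\alpha\in(0,1)$, $r=\lceil(1-\alpha)(n+1)\rceil$, and let $m_n\ge 0$ be an integer with $r+m_n\le n$. Let $[a,b]$ be a range with $b\ge \max_{1\le i\le n}S_i$, let $N\ge 1$ be an integer, $\sigma>0$, and $\beta\in(0,1)$. Let $\hat q$ be the output of the Buffered DP Right-Endpoint Binary Search (described in the context) run with these inputs. Then, with probability at least $1-\beta$ (over the Gaussian noise, conditionally on the scores), $\hat q\ge S_{(r+m_n)}$, where $S_{(k)}$ denotes the $k$-th smallest of $S_1,\dots,S_n$.
   Context: Notation: $C_n(t):=\sum_{i=1}^n \mathbb 1\{S_i\le t\}$ is the empirical count function; $\Phi$ is the standard normal CDF. Buffered DP Right-Endpoint Binary Search (Algorithm 2): input scores $S_1,\dots,S_n$, range $[a,b]$, miscoverage level $\alpha$, buffer $m_n$, number of steps $N$, noise scale $\sigma$, failure probability $\beta$. Set $r=\lceil(1-\alpha)(n+1)\rceil$, $\tau=\sigma\Phi^{-1}(1-\beta/N)-1$, $r'=r+m_n+\tau$, $\texttt{left}=a$, $\texttt{right}=b$. For $k=1,\dots,N$: set $\texttt{mid}=(\texttt{left}+\texttt{right})/2$; draw $Z_k\sim\mathcal N(0,\sigma^2)$ independently of everything else (including previous steps) and compute $\tilde C_k=C_n(\texttt{mid})+Z_k$; if $\tilde C_k\ge r'$ set $\texttt{right}=\texttt{mid}$, otherwise set $\texttt{left}=\texttt{mid}$. Output $\hat q=\texttt{right}$. *)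

From HB Require Import structures.
From mathcomp Require Import all_boot all_order all_algebra.
From mathcomp Require Import all_classical all_reals all_analysis.
Set Implicit Arguments. Unset Strict Implicit. Unset Printing Implicit Defensive.
Import Order.TTheory GRing.Theory Num.Theory.
Local Open Scope classical_set_scope.
Local Open Scope ring_scope.

Section defs.
Context {R : realType}.

Definition Phi (x : R) : R := fine (normal_prob 0 1 `]-oo, x]).

(* its inverse (quantile function): for p in (0,1) this is the unique x
   with Phi x = p, since Phi is continuous and strictly increasing *)
Definition Phi_inv (p : R) : R := sup [set x : R | Phi x <= p].

Definition count_le (n : nat) (S : 'I_n -> R) (t : R) : R :=
  (#|[pred i : 'I_n | S i <= t]|)%:R.

Definition order_stat (n : nat) (S : 'I_n -> R) (k : nat) : R :=
  nth 0 (sort <=%O [seq S i | i <- enum 'I_n]) k.-1.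

Definition bs_step (n : nat) (S : 'I_n -> R) (r' : R) (lr : R * R) (z : R)
  : R * R :=
  let mid := (lr.1 + lr.2) / 2 in
  if r' <= count_le S mid + z then (lr.1, mid) else (mid, lr.2).

(* Algorithm 2 output, given the noise sequence zs = [Z_1; ...; Z_N] *)
Definition bs_output (n : nat) (S : 'I_n -> R) (a b r' : R) (zs : seq R) : R :=
  (foldl (bs_step S r') (a, b) zs).2.

Definition bs_threshold (r : int) (m N : nat) (sigma beta : R) : R :=
  r%:~R + m%:R + (sigma * Phi_inv (1 - beta / N%:R) - 1).

(* Probability that the event E (a predicate on the noise sequence
   [Z_1; ...; Z_N]) holds when Z_1, ..., Z_N are i.i.d. N(0, sigma^2):
   the N-fold iterated integral against the normal law (= product measure). *)
Fixpoint noise_prob (sigma : R) (N : nat) (E : seq R -> bool) : \bar R :=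
  match N with
  | 0 => ((E [::])%:R)%:E
  | N'.+1 => (\int[normal_prob 0 sigma]_z noise_prob sigma N' (fun zs => E (z :: zs)))%E
  end.

End defs.

From HB Require Import structures.
From mathcomp Require Import all_boot all_order all_algebra.
From mathcomp Require Import all_classical all_reals all_analysis.
From mathcomp Require Import zify ring lra measurable_realfun.
Import Order.TTheory GRing.Theory Num.Theory.
Local Open Scope ring_scope.
Local Open Scope classical_set_scope.

(* On the event that all the noises Z_1, ..., Z_N are below
   t = sigma Phi^-1(1 - beta/N), every step k moving the right endpoint to mid has
   C_n(mid) >= r' - Z_k > r' - t = r + m_n - 1, so S_(r+m_n) <= mid; as
   S_(r+m_n) <= b at the start, the output stays above S_(r+m_n).  That event has probability
   P(Z < t)^N >= (1 - beta/N)^N >= 1 - beta, by Bernoulli's inequality. *)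

Section order_statistics.
Variables (R : realType) (n : nat) (S : 'I_n -> R).

Let sorted_scores := sort <=%O [seq S i | i <- enum 'I_n].

Lemma count_le_sort t :
  count_le S t = (count (<= t) sorted_scores)%:R.
Proof.
rewrite /count_le (permP (permEl (perm_sort _ _))) count_map cardE /enum_mem.
by rewrite size_filter count_filter; congr (_%:R); apply: eq_count => i; rewrite !inE andbT.
Qed.

Lemma count_le_ub t : (forall i, S i <= t) -> count_le S t = n%:R.
Proof.
move=> St; rewrite /count_le -[in RHS](card_ord n); congr (_%:R).
by apply: eq_card => i; rewrite !inE St.
Qed.

Lemma order_stat_le k t :
  (0 < k <= n)%N -> k%:R <= count_le S t -> order_stat S k <= t.
Proof.
move=> /andP[k0 kn]; rewrite count_le_sort ler_nat /order_stat -/sorted_scores.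
have sorted_s : sorted <=%O sorted_scores by apply: sort_sorted; exact: le_total.
have size_s : size sorted_scores = n by rewrite size_sort size_map size_enum_ord.
rewrite leNgt; apply: contraTN => tk; rewrite -ltnNge.
rewrite -(cat_take_drop k.-1 sorted_scores) count_cat.
have -> : count (<= t) (drop k.-1 sorted_scores) = 0%N.
  apply/eqP; rewrite -leqn0 leqNgt -has_count; apply/hasPn => y /(nthP 0)[j].
  rewrite size_drop size_s nth_drop => jn <-; rewrite -ltNge (lt_le_trans tk)//.
  by apply: (sorted_leq_nth le_trans lexx) => //; rewrite ?inE ?size_s; lia.
rewrite addn0 (leq_ltn_trans (count_size _ _))// size_take size_s.
by case: ifP; lia.
Qed.

End order_statistics.

Lemma order_stat_le_bs_step (R : realType) n (S : 'I_n -> R) k (r' t z : R) lr :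
  (0 < k <= n)%N -> k%:R - 1 + t <= r' -> z < t ->
  order_stat S k <= lr.2 -> order_stat S k <= (bs_step S r' lr z).2.
Proof.
(* Moving to [mid] needs [C_n(mid) + z >= r' > k - 1 + z], hence [C_n(mid) >= k]. *)
move=> kn tr' zt kr; rewrite /bs_step; case: ifP => //= move_right.
apply: order_stat_le => //; move: move_right; rewrite /count_le.
set c := #|_| => move_right.
have : k%:R < c.+1%:R :> R by rewrite -natr1; lra.
by rewrite ltr_nat ltnS ler_nat.
Qed.

Lemma order_stat_le_bs_output (R : realType) n (S : 'I_n -> R) k (a b r' t : R) zs :
  (0 < k <= n)%N -> k%:R - 1 + t <= r' -> all (< t) zs ->
  order_stat S k <= b -> order_stat S k <= bs_output S a b r' zs.
Proof.
move=> kn tr'; rewrite /bs_output -[b in _ <= b -> _]/((a, b).2).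
elim: zs (a, b) => [//|z zs IH] lr /= /andP[zt zst] kr.
by apply: IH zst _; exact: order_stat_le_bs_step kn tr' zt kr.
Qed.

Section normal_cdf.
Variable R : realType.

Lemma normal_prob_fin (s : R) (A : set R) : measurable A ->
  normal_prob 0 s A \is a fin_num.
Proof.
move=> mA; rewrite ge0_fin_numE ?measure_ge0//.
by apply: le_lt_trans (probability_le1 (normal_prob 0 s) mA) _; rewrite ltry.
Qed.

Lemma normal_pdf_scale (s y : R) : 0 < s ->
  normal_pdf 0 s (s * y) * s = normal_pdf 0 1 y.
Proof.
move=> s0; have sN0 : s != 0 by rewrite gt_eqF.
rewrite !normal_pdfE ?oner_neq0// /normal_peak /normal_fun !subr0 expr1n mul1r.
rewrite (_ : - (s * y) ^+ 2 / (s ^+ 2 *+ 2) = - y ^+ 2 / 2); last first.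
  by rewrite -mulr_natr; field.
rewrite -mulrnAr sqrtrM ?sqr_ge0// sqrtr_sqr gtr0_norm//.
have : Num.sqrt (pi *+ 2) != 0 :> R by rewrite gt_eqF// sqrtr_gt0 mulrn_wgt0// pi_gt0.
by move: (Num.sqrt _) => c cN0; field; rewrite cN0 sN0.
Qed.

Lemma normal_prob_scale (s x : R) : 0 < s ->
  normal_prob 0 s `]-oo, s * x] = normal_prob 0 1 `]-oo, x].
Proof.
move=> s0; rewrite /normal_prob.
have dscale : (fun y : R => s * y)^`()%classic = cst s.
  apply/funext => y; rewrite derive1E deriveM// derive_id derive_cst scaler0 addr0.
  by rewrite /GRing.scale/= mulr1.
rewrite (@increasing_ge0_integration_by_substitutionNy _ (fun y => s * y) (normal_pdf 0 s) x).
- by apply: eq_integral => y _; rewrite dscale; congr (_%:E); exact: normal_pdf_scale.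
- by move=> y z _ _ yz; rewrite ltr_pM2l.
- by move=> y _; rewrite dscale; exact: cvg_cst.
- by rewrite dscale; exact: is_cvg_cst.
- by rewrite dscale; exact: cvg_cst.
- split; first by move=> y _; exact: derivableM.
  by apply: cvg_at_left_filter; exact: mulrl_continuous.
- by apply: gt0_cvgMrNy => //; exact: cvg_id.
- apply/continuous_within_itvNycP; split.
    by move=> y _; exact: continuous_normal_pdf (lt0r_neq0 s0) y.
  by apply: cvg_at_left_filter; exact: continuous_normal_pdf (lt0r_neq0 s0) _.
- by move=> y _; exact: normal_pdf_ge0.
Qed.

Lemma normal_prob_itvNyo (s y : R) :
  normal_prob 0 s `]-oo, y[ = normal_prob 0 s `]-oo, y].
Proof.
rewrite /normal_prob integral_itv_bndo_bndc//.
by apply/measurable_EFinP; apply: measurable_funTS; exact: measurable_normal_pdf.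
Qed.

Lemma normal_prob_itvoc_le (s x y : R) : s != 0 -> x <= y ->
  (normal_prob 0 s `]x, y] <= (normal_peak s * (y - x))%:E)%E.
Proof.
move=> sN0 xy; rewrite /normal_prob.
apply: (@le_trans _ _ (\int[lebesgue_measure]_(z in `]x, y]) (normal_peak s)%:E)%E).
  apply: ge0_le_integral => //.
  - by move=> z _; rewrite lee_fin normal_pdf_ge0.
  - by apply/measurable_EFinP; apply: measurable_funTS; exact: measurable_normal_pdf.
  - by move=> z _; rewrite lee_fin normal_pdf_ub.
rewrite integral_cst// [X in (_ * X)%E](lebesgue_measure_itv `]x, y]%R) /= lte_fin.
case: ltP => _; last by rewrite mule0 lee_fin mulr_ge0 ?normal_peak_ge0 ?subr_ge0.
by rewrite -EFinB -EFinM.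
Qed.

End normal_cdf.

Section Phi.
Variable R : realType.

Lemma PhiE (x : R) : (Phi x)%:E = normal_prob 0 1 `]-oo, x].
Proof. by rewrite /Phi fineK// normal_prob_fin. Qed.

Lemma le_Phi : {homo @Phi R : x y / x <= y}.
Proof.
move=> x y xy; rewrite -lee_fin !PhiE le_measure// ?inE//.
by move=> z /=; rewrite !in_itv /= => /le_trans; apply.
Qed.

Lemma Phi_lipschitz (x h : R) : 0 <= h -> Phi (x + h) <= Phi x + normal_peak 1 * h.
Proof.
move=> h0; rewrite -lee_fin EFinD !PhiE.
apply: (@le_trans _ _ (normal_prob 0 1 (`]-oo, x] `|` `]x, x + h]))).
  apply: le_measure; rewrite ?inE//; first exact: measurableU.
  move=> z /=; rewrite !in_itv /= => zxh.
  by case: leP; [left | right].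
apply: le_trans (measureU2 _ _ _) _ => //; rewrite leeD2l//.
have := @normal_prob_itvoc_le R 1 x (x + h) (oner_neq0 _).
by rewrite addrAC subrr add0r lerDl; apply.
Qed.

Lemma exists_gt_Phi (p : R) : p < 1 -> exists x, p < Phi x.
Proof.
move=> p1; apply: contrapT => /forallNP Phi_le_p.
pose F n := `]-oo, (n%:R : R)].
have cvF : (normal_prob 0 1 \o F) @ \oo --> normal_prob 0 1 (\bigcup_n F n).
  apply: nondecreasing_cvg_mu => [i||i j ij]; first exact: measurable_itv.
    by apply: bigcupT_measurable => i; exact: measurable_itv.
  by apply/subsetPset => z; rewrite /F /= !in_itv /= => /le_trans; apply; rewrite ler_nat.
have bigcupF : \bigcup_n F n = setT.
  apply/seteqP; split => // z _; exists (Num.Def.archi_bound `|z|) => //.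
  by rewrite /F /= in_itv /=; exact/ltW/(le_lt_trans (ler_norm z))/archi_boundP.
rewrite bigcupF probability_setT in cvF.
have : (lim ((normal_prob 0 1 \o F) @ \oo) <= p%:E)%E.
  apply: lime_le; first by apply/cvg_ex; eexists; exact: cvF.
  by near=> n; rewrite /= -PhiE lee_fin leNgt; apply/negP; exact: Phi_le_p.
rewrite (cvg_lim _ cvF) // lee_fin; lra.
Unshelve. all: end_near.
Qed.

(* [Phi] is Lipschitz, hence right-continuous, so the supremum defining
   [Phi_inv p] cannot have [Phi] strictly below [p]. *)
Lemma le_Phi_Phi_inv (p : R) : p < 1 -> p <= Phi (Phi_inv p).
Proof.
move=> p1; have [x1 px1] := exists_gt_Phi p p1.
have ub : has_ubound [set x : R | Phi x <= p].
  exists x1 => x /= Phix; rewrite leNgt; apply/negP => /ltW/le_Phi; lra.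
set s := Phi_inv p.
have above_s y : s < y -> p < Phi y.
  by move=> sy; rewrite ltNge; apply/negP => Phiy; have : y <= s := ub_le_sup ub Phiy; lra.
have peak_ge0 := normal_peak_ge0 (1 : R).
rewrite leNgt; apply/negP => Phis.
pose h := (p - Phi s) / (normal_peak 1 + 1).
have h0 : 0 < h by apply: divr_gt0; lra.
have := above_s (s + h); rewrite ltrDl => /(_ h0).
have := Phi_lipschitz s h (ltW h0).
have : normal_peak 1 * h < p - Phi s by rewrite /h mulrA ltr_pdivrMr; nra.
lra.
Qed.

End Phi.

Lemma le_normal_prob_quantile (R : realType) (s p : R) : 0 < s -> p < 1 ->
  p <= fine (normal_prob 0 s `]-oo, s * Phi_inv p[).
Proof.
by move=> s0 p1; rewrite normal_prob_itvNyo normal_prob_scale// -/(Phi _) le_Phi_Phi_inv.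
Qed.

Lemma le_ge0_integral d (T : measurableType d) (R : realType)
    (mu : {measure set T -> \bar R}) (f g : T -> \bar R) :
  (forall x, 0 <= f x)%E -> (forall x, f x <= g x)%E ->
  (\int[mu]_x f x <= \int[mu]_x g x)%E.
Proof.
move=> f0 fg; have g0 x : (0 <= g x)%E by apply: le_trans (fg x).
rewrite !ge0_integralTE//; apply: ge_ereal_sup => _ [h /= hf <-].
by apply: ereal_sup_ubound; exists h => //= x; exact: le_trans (hf x) (fg x).
Qed.

Section noise_prob.
Variables (R : realType) (sigma : R).

Lemma noise_prob_ge0 N E : (0 <= noise_prob sigma N E)%E.
Proof.
elim: N E => [|N IH] E /=; first by rewrite lee_fin; case: (E [::]).
by apply: integral_ge0 => z _; exact: IH.
Qed.

Lemma noise_prob0 N : noise_prob sigma N (fun=> false) = 0%E.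
Proof. by elim: N => [//|N IH] /=; rewrite IH integral0. Qed.

Lemma le_noise_prob N (E F : seq R -> bool) :
  (forall zs, E zs -> F zs) -> (noise_prob sigma N E <= noise_prob sigma N F)%E.
Proof.
elim: N E F => [|N IH] E F EF /=.
  by rewrite lee_fin; case: (boolP (E [::])) => [/EF -> //|_]; case: (F [::]).
apply: le_ge0_integral => z; first exact: noise_prob_ge0.
by apply: IH => zs; exact: EF.
Qed.

Lemma noise_prob_all_lt N t :
  noise_prob sigma N (all (< t)) = ((fine (normal_prob 0 sigma `]-oo, t[)) ^+ N)%:E.
Proof.
elim: N => [//|N IH] /=; set q := fine _.
under eq_integral => z _.
  rewrite (_ : noise_prob _ _ _ = (\1_`]-oo, t[ z)%:E * (q ^+ N)%:E)%E; last first.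
    rewrite indicE mem_setE in_itv /=; case: (z < t).
      by rewrite mul1e IH.
    by rewrite mul0e noise_prob0.
  over.
rewrite ge0_integralZr//; last by rewrite lee_fin exprn_ge0// fine_ge0// measure_ge0.
  by rewrite integral_indic// setIT exprSr EFinM muleC /q fineK// normal_prob_fin.
by apply/measurable_EFinP; exact: measurable_indic.
Qed.

End noise_prob.

Lemma bernoulli_inequality (R : realFieldType) (x : R) N :
  -1 <= x -> 1 + N%:R * x <= (1 + x) ^+ N.
Proof.
move=> x_ge; elim: N => [|N IH]; first by rewrite mul0r addr0 expr0.
rewrite exprS -natr1; have x1_ge0 : 0 <= 1 + x by lra.
have := mulr_ge0 x1_ge0 (eqbRL (subr_ge0 _ _) IH).
have := mulr_ge0 (ler0n R N) (sqr_ge0 x).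
nra.
Qed.

Theorem lemma1 (R : realType) (n : nat) (S : 'I_n -> R) (alpha : R)
  (m : nat) (a b : R) (N : nat) (sigma beta : R) :
  0 < alpha < 1 ->
  Num.ceil ((1 - alpha) * n.+1%:R) + m%:Z <= n%:Z ->
  (forall i : 'I_n, S i <= b) ->
  (1 <= N)%N ->
  0 < sigma ->
  0 < beta < 1 ->
  ((1 - beta)%:E <=
   noise_prob sigma N (fun zs => (
     order_stat S (absz (Num.ceil ((1 - alpha) * n.+1%:R) + m%:Z))
     <= bs_output S a b
          (bs_threshold (Num.ceil ((1 - alpha) * n.+1%:R)) m N sigma beta) zs)%R))%E.
Proof.
move=> /andP[alpha0 alpha1] rmn Sb N1 sigma0 /andP[beta0 beta1].
set r := Num.ceil _; set k := absz (r + m%:Z).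
have r_gt0 : 0 < r by rewrite ceil_gt0 mulr_gt0 ?subr_gt0.
have kZ : k%:Z = r + m%:Z by rewrite /k gez0_abs // addr_ge0 // ltW.
have kE : k%:R = r%:~R + m%:R :> R by rewrite -[k%:R]/(k%:Z%:~R) kZ intrD.
have kn : (0 < k <= n)%N by move: kZ rmn r_gt0; lia.
set p := 1 - beta / N%:R; set t := sigma * Phi_inv p.
have N1R : 1 <= N%:R :> R by rewrite ler1n.
have betaN : 0 < beta / N%:R <= 1 by rewrite divr_gt0 ?ler_pdivrMr /=; lra.
apply: (@le_trans _ _ (noise_prob sigma N (all (< t)))); last first.
  apply: le_noise_prob => zs zst; apply: order_stat_le_bs_output zst _ => //.
    by rewrite /bs_threshold -/p -/t kE; lra.
  by apply: order_stat_le => //; rewrite count_le_ub // ler_nat; case/andP: kn.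
have p_ge0 : 0 <= p by rewrite /p; lra.
have quantile : p <= fine (normal_prob 0 sigma `]-oo, t[).
  by apply: le_normal_prob_quantile; rewrite /p; lra.
have bernoulli : 1 - beta <= p ^+ N.
  have := @bernoulli_inequality R (- (beta / N%:R)) N.
  have NbetaN : N%:R * (beta / N%:R) = beta by rewrite mulrC divfK // pnatr_eq0 -lt0n.
  by rewrite mulrN NbetaN; apply; lra.
rewrite noise_prob_all_lt lee_fin (le_trans bernoulli)//.
by apply: lerXn2r; rewrite ?nnegrE ?(le_trans p_ge0 quantile).
Qed.
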